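(* Let $\mathbb{T}$ be a time scale, let $f:\mathbb{T}\to\mathbb{R}$, let $t\in\mathbb{T}^{\kappa}$ and let $\alpha\in(0,1]$. Then: (i) If $f$ is continuous at $t$ and $t$ is right-scattered, then $f$ is delta differentiable of order $\alpha$ at $t$ and $$f^{\Delta^{\alpha}}(t)=\frac{f^{\alpha}(\sigma(t))-f^{\alpha}(t)}{\sigma^{\alpha}(t)-t^{\alpha}}.$$ (ii) If $t$ is right-dense, then $f$ is delta differentiable of order $\alpha$ at $t$ if and only if the limit $\lim_{s\to t,\, s\in\mathbb{T}}\frac{f^{\alpha}(t)-f^{\alpha}(s)}{t^{\alpha}-s^{\alpha}}$ exists as a finite number, and in this case $$f^{\Delta^{\alpha}}(t)=\lim_{s\to t}\frac{f^{\alpha}(t)-f^{\alpha}(s)}{t^{\alpha}-s^{\alpha}}.$$ (iii) If $f$ is delta differentiable of order $\alpha$ at $t$, then $$f^{\alpha}(\sigma(t))=f^{\alpha}(t)+\bigl(\sigma(t)^{\alpha}-t^{\alpha}\bigr)f^{\Delta^{\alpha}}(t).$$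
   Context: A time scale $\mathbb{T}$ is a nonempty closed subset of $\mathbb{R}$. The forward jump operator is $\sigma(t)=\inf\{s\in\mathbb{T}:s>t\}$ and the backward jump operator is $\rho(t)=\sup\{s\in\mathbb{T}:s<t\}$. A point $t$ is right-scattered if $\sigma(t)>t$, and right-dense if $t<\sup\mathbb{T}$ and $\sigma(t)=t$. If $\mathbb{T}$ has a left-scattered maximum $m$ (i.e. $\rho(m)<m$), then $\mathbb{T}^{\kappa}=\mathbb{T}\setminus\{m\}$; otherwise $\mathbb{T}^{\kappa}=\mathbb{T}$. For a real-valued $f$, $f^{\alpha}$ denotes the pointwise power $(f(\cdot))^{\alpha}$, $\sigma^{\alpha}(t)=\sigma(t)^{\alpha}$, and powers of real numbers (possibly negative) are taken as complex numbers, so these quantities may be complex. Definition: for $\alpha\in(0,1]$ and $t\in\mathbb{T}^{\kappa}$, $f$ is delta differentiable of order $\alpha$ at $t$ with delta derivative of order $\alpha$ equal to the (complex) number $f^{\Delta^{\alpha}}(t)$ if for every $\epsilon>0$ there is $\delta>0$ such that, with $U=(t-\delta,t+\delta)\cap\mathbb{T}$, $$\bigl|[f^{\alpha}(\sigma(t))-f^{\alpha}(s)]-f^{\Delta^{\alpha}}(t)[\sigma(t)^{\alpha}-s^{\alpha}]\bigr|\le\epsilon\,|\sigma(t)^{\alpha}-s^{\alpha}|\quad\text{for all } s\in U.$$ *)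

From Stdlib Require Import Reals Lra ClassicalEpsilon.
From Coquelicot Require Import Coquelicot.
Open Scope R_scope.

(* Principal-branch complex power of a real number x, for a real exponent a:
   x^a = exp(a ln x)            if x > 0,
   0^a = 0                      (a > 0 in all uses),
   x^a = |x|^a e^{i pi a}       if x < 0. *)
Definition rpowC (x a : R) : C :=
  if Rlt_dec 0 x then RtoC (Rpower x a)
  else if Req_EM_T x 0 then RtoC 0
  else (Rpower (- x) a * cos (PI * a), Rpower (- x) a * sin (PI * a)).

Definition time_scale (T : R -> Prop) : Prop := (exists t, T t) /\ closed T.

(* Forward jump: sigma t = inf {s in T | s > t}, with inf of the empty set = t
   (standard convention inf emptyset = sup T, and then t = max T). *)
Definition fwd_jump (T : R -> Prop) (t : R) : R :=
  match excluded_middle_informative (exists s, T s /\ t < s) with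
  | left _ => real (Glb_Rbar (fun s => T s /\ t < s))
  | right _ => t
  end.

Definition bwd_jump (T : R -> Prop) (t : R) : R :=
  match excluded_middle_informative (exists s, T s /\ s < t) with
  | left _ => real (Lub_Rbar (fun s => T s /\ s < t))
  | right _ => t
  end.

Definition right_scattered (T : R -> Prop) (t : R) : Prop := t < fwd_jump T t.

Definition right_dense (T : R -> Prop) (t : R) : Prop :=
  Rbar_lt (Finite t) (Lub_Rbar T) /\ fwd_jump T t = t.

Definition left_scattered_max (T : R -> Prop) (m : R) : Prop :=
  T m /\ (forall s, T s -> s <= m) /\ bwd_jump T m < m.

Definition in_Tkappa (T : R -> Prop) (t : R) : Prop :=
  T t /\ ~ left_scattered_max T t.

Definition delta_diff_alpha (T : R -> Prop) (alpha : R) (f : R -> R) (t : R)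
  (D : C) : Prop :=
  forall eps : R, 0 < eps -> exists delta : R, 0 < delta /\
    forall s : R, T s -> Rabs (s - t) < delta ->
      Cmod (Cminus (Cminus (rpowC (f (fwd_jump T t)) alpha) (rpowC (f s) alpha))
                   (Cmult D (Cminus (rpowC (fwd_jump T t) alpha) (rpowC s alpha))))
      <= eps * Cmod (Cminus (rpowC (fwd_jump T t) alpha) (rpowC s alpha)).

(* At a right-scattered point the claimed derivative is the secant slope of x |-> f(x)^alpha
   against x |-> x^alpha over [t, sigma(t)]: near t the error is controlled by the
   continuity of f and of x |-> x^alpha at t, while |sigma(t)^alpha - s^alpha| stays away
   from 0.  At a right-dense point, x |-> x^alpha is injective for 0 < alpha <= 1, so
   |t^alpha - s^alpha| > 0 for s <> t and dividing the defining inequality by it gives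
   exactly the epsilon-delta form of the limit; right density makes the punctured
   neighbourhood filter proper, so that limit is unique.  Finally, taking s = t in the
   definition bounds the error of (iii) by every eps |sigma(t)^alpha - t^alpha|. *)

From Stdlib Require Import Reals Lra ClassicalEpsilon.
From Coquelicot Require Import Coquelicot.
Open Scope R_scope.

Lemma Rpower_inj_l x y a : 0 < x -> 0 < y -> a <> 0 -> Rpower x a = Rpower y a -> x = y.
Proof.
  intros Hx Hy Ha H. unfold Rpower in H. apply exp_inv in H.
  apply ln_inv; auto. apply (Rmult_eq_reg_l a); auto.
Qed.

Lemma Rpower_continuous_pos y0 a : 0 < y0 -> forall e, 0 < e -> exists d, 0 < d /\
  forall y, Rabs (y - y0) < d -> Rabs (Rpower y a - Rpower y0 a) < e.
Proof.
  intros Hy e He.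
  assert (Hc : continuity_pt (fun x => Rpower x a) y0).
  { apply derivable_continuous_pt. exists (a * Rpower y0 (a - 1)).
    apply derivable_pt_lim_power; auto. }
  destruct (Hc e He) as [d [Hd H]]. exists d; split; auto.
  intros y Hyd. destruct (Req_dec y y0) as [->|Hne].
  - rewrite Rminus_eq_0, Rabs_R0; auto.
  - apply (H y). repeat split; auto.
Qed.

Lemma locally_R x (P : R -> Prop) :
  locally x P <-> exists d, 0 < d /\ forall y, Rabs (y - x) < d -> P y.
Proof.
  split.
  - intros [d H]. exists d. split; [apply cond_pos | exact H].
  - intros [d [Hd H]]. exists (mkposreal d Hd). exact H.
Qed.

Lemma filterlim_within_Cmod (E : R -> Prop) t (q : R -> C) L :
  filterlim q (within E (locally t)) (locally L) <->
  forall eps, 0 < eps -> exists d, 0 < d /\ forall s, E s -> Rabs (s - t) < d ->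
     Cmod (q s - L)%C < eps.
Proof.
  rewrite filterlim_locally_ball_norm. split.
  - intros H eps He. destruct (proj1 (locally_R _ _) (H (mkposreal eps He))) as [d [Hd Hq]].
    exists d. split; auto. intros s Es Hs. exact (Hq s Hs Es).
  - intros H eps. apply locally_R. destruct (H eps (cond_pos eps)) as [d [Hd Hq]].
    exists d. split; auto. intros s Hs Es. exact (Hq s Es Hs).
Qed.

Lemma right_dense_approx T t : right_dense T t ->
  forall eps, 0 < eps -> exists s, T s /\ t < s < t + eps.
Proof.
  intros [Hlub Hfj] eps He.
  assert (Hgt : exists s, T s /\ t < s).
  { apply NNPP. intros Hn.
    assert (Hub : is_ub_Rbar T t).
    { intros x Hx. simpl. apply Rnot_lt_le. intros Hlt. apply Hn. eauto. }
    pose proof (proj2 (Lub_Rbar_correct T) _ Hub).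
    destruct (Lub_Rbar T); simpl in *; lra. }
  unfold fwd_jump in Hfj.
  destruct (excluded_middle_informative (exists s, T s /\ t < s)) as [_|]; [|tauto].
  apply NNPP. intros Hn.
  assert (Hlb : is_lb_Rbar (fun s => T s /\ t < s) (t + eps)).
  { intros x [Hx Htx]. simpl. apply Rnot_lt_le. intros Hlt. apply Hn. exists x; auto. }
  destruct Hgt as [s0 Hs0].
  pose proof (proj1 (Glb_Rbar_correct (fun s => T s /\ t < s)) s0 Hs0).
  pose proof (proj2 (Glb_Rbar_correct (fun s => T s /\ t < s)) _ Hlb).
  destruct (Glb_Rbar (fun s => T s /\ t < s)); simpl in *; lra.
Qed.

Lemma within_punctured_proper T t :
  right_dense T t -> ProperFilter' (within (fun s => T s /\ s <> t) (locally t)).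
Proof.
  intros Hrd. constructor; [|apply within_filter, locally_filter].
  intros H. destruct (proj1 (locally_R _ _) H) as [d [Hd Hs]].
  destruct (right_dense_approx T t Hrd d Hd) as [s [Ts Hts]].
  apply (Hs s); [rewrite Rabs_pos_eq; lra | split; [exact Ts | lra]].
Qed.

Section ComplexPower.
Local Open Scope C_scope.

Lemma Cminus_eq0 (x y : C) : x - y = 0 -> x = y.
Proof. intros H. replace x with ((x - y) + y) by ring. rewrite H. ring. Qed.

Lemma Cmod_sub_mul_div (w z D : C) : z <> 0 ->
  Cmod (w - D * z) = (Cmod (w / z - D) * Cmod z)%R.
Proof. intros Hz. rewrite <- Cmod_mult. f_equal. field. exact Hz. Qed.

Lemma Cmod_eq0_of_le_mul (z : C) (K : R) :
  0 <= K -> (forall eps, 0 < eps -> Cmod z <= eps * K)%R -> z = 0.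
Proof.
  intros HK H. apply Cmod_eq_0.
  destruct (Cmod_ge_0 z) as [Hz|Hz]; [exfalso|auto].
  specialize (H (Cmod z / (K + 1))%R ltac:(apply Rdiv_lt_0_compat; lra)).
  assert (Cmod z / (K + 1) * K < Cmod z)%R.
  { apply (Rmult_lt_reg_r (K + 1)); [lra|]. field_simplify; nra. }
  lra.
Qed.

(* For the secant slope [D0] the error at [S] equals [-(F - B) + D0 (S - Q)],
   while [|P - S| > |P - Q| - eta]. *)
Lemma secant_estimate (A B P Q F S : C) (eps eta : R) :
  P - Q <> 0 -> (0 <= eps)%R ->
  (eta * (1 + Cmod ((A - B) / (P - Q)) + eps) <= eps * Cmod (P - Q))%R ->
  (Cmod (F - B) < eta)%R -> (Cmod (S - Q) < eta)%R ->
  (Cmod ((A - F) - (A - B) / (P - Q) * (P - S)) <= eps * Cmod (P - S))%R.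
Proof.
  intros HPQ He Heta HF HS.
  set (D0 := (A - B) / (P - Q)) in *.
  replace ((A - F) - D0 * (P - S)) with (- (F - B) + D0 * (S - Q))
    by (unfold D0; field; exact HPQ).
  assert (HK : (Cmod (P - Q) <= Cmod (P - S) + Cmod (S - Q))%R).
  { replace (P - Q) with ((P - S) + (S - Q)) by ring. apply Cmod_triangle. }
  pose proof (Cmod_ge_0 D0).
  eapply Rle_trans; [apply Cmod_triangle|].
  rewrite Cmod_opp, Cmod_mult.
  assert (Cmod D0 * Cmod (S - Q) <= Cmod D0 * eta)%R by (apply Rmult_le_compat_l; lra).
  assert (eps * Cmod (P - Q) <= eps * (Cmod (P - S) + eta))%R
    by (apply Rmult_le_compat_l; lra).
  lra.
Qed.

Lemma rpowC_pos x a : (0 < x)%R -> rpowC x a = RtoC (Rpower x a).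
Proof. intros Hx. unfold rpowC. destruct (Rlt_dec 0 x); [reflexivity|lra]. Qed.

Lemma rpowC_0 a : rpowC 0 a = 0.
Proof.
  unfold rpowC. destruct (Rlt_dec 0 0); [lra|].
  destruct (Req_EM_T 0 0); [reflexivity|lra].
Qed.

Lemma rpowC_neg x a : (x < 0)%R ->
  rpowC x a = RtoC (Rpower (- x) a) * (cos (PI * a), sin (PI * a)).
Proof.
  intros Hx. unfold rpowC.
  destruct (Rlt_dec 0 x); [lra|]. destruct (Req_EM_T x 0); [lra|].
  unfold Cmult, RtoC; simpl. f_equal; ring.
Qed.

Lemma Cmod_cos_sin (th : R) : Cmod (cos th, sin th) = 1%R.
Proof.
  unfold Cmod. cbn [fst snd]. pose proof (sin2_cos2 th). unfold Rsqr in *.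
  replace (cos th ^ 2 + sin th ^ 2)%R with 1%R by nra. apply sqrt_1.
Qed.

Lemma Cmod_rpowC x a : x <> 0%R -> Cmod (rpowC x a) = Rpower (Rabs x) a.
Proof.
  intros Hx. destruct (Rlt_or_le 0 x).
  - rewrite rpowC_pos, Cmod_R, (Rabs_pos_eq x) by lra.
    apply Rabs_pos_eq, Rlt_le, exp_pos.
  - rewrite rpowC_neg, Cmod_mult, Cmod_cos_sin, Cmod_R, Rmult_1_r, (Rabs_left x) by lra.
    apply Rabs_pos_eq, Rlt_le, exp_pos.
Qed.

Lemma Cmod_rpowC_sub x y a : (0 < x * y)%R ->
  Cmod (rpowC x a - rpowC y a) = Rabs (Rpower (Rabs x) a - Rpower (Rabs y) a).
Proof.
  intros Hxy. destruct (Rlt_or_le 0 x).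
  - assert (0 < y)%R by nra.
    rewrite !rpowC_pos, (Rabs_pos_eq x), (Rabs_pos_eq y) by lra. rewrite <- Cmod_R.
    f_equal. unfold Cminus, Cplus, Copp, RtoC; simpl. f_equal; ring.
  - assert (y < 0)%R by nra.
    rewrite !rpowC_neg, (Rabs_left x), (Rabs_left y) by nra.
    replace (RtoC (Rpower (- x) a) * _ - RtoC (Rpower (- y) a) * _)
      with (RtoC (Rpower (- x) a - Rpower (- y) a) * (cos (PI * a), sin (PI * a)))
      by (unfold Cminus, Cplus, Copp, Cmult, RtoC; simpl; f_equal; ring).
    rewrite Cmod_mult, Cmod_cos_sin, Cmod_R. ring.
Qed.

(* The negative branch has argument [PI * a], which lies in [(0, PI]]. *)
Lemma rpowC_opp_neq x a : (0 < a <= 1)%R -> (0 < x)%R -> rpowC (- x) a <> rpowC x a.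
Proof.
  intros Ha Hx H.
  rewrite rpowC_neg, Ropp_involutive, rpowC_pos in H by lra.
  apply (f_equal fst) in H. simpl in H.
  assert (Hcos : (cos (PI * a) < 1)%R).
  { pose proof PI_RGT_0. rewrite <- cos_0. apply cos_decreasing_1; nra. }
  pose proof (exp_pos (a * ln x)). unfold Rpower in H. nra.
Qed.

Lemma rpowC_inj x y a : (0 < a <= 1)%R -> rpowC x a = rpowC y a -> x = y.
Proof.
  intros Ha H.
  destruct (Req_dec x 0) as [->|Hx]; destruct (Req_dec y 0) as [->|Hy]; auto.
  - apply (f_equal Cmod) in H. rewrite rpowC_0, Cmod_0, Cmod_rpowC in H by auto.
    pose proof (exp_pos (a * ln (Rabs y))). unfold Rpower in H. lra.
  - apply (f_equal Cmod) in H. rewrite rpowC_0, Cmod_0, Cmod_rpowC in H by auto.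
    pose proof (exp_pos (a * ln (Rabs x))). unfold Rpower in H. lra.
  - assert (Habs : Rabs x = Rabs y).
    { apply (Rpower_inj_l _ _ a); try apply Rabs_pos_lt; try lra.
      rewrite <- !Cmod_rpowC by auto. now rewrite H. }
    destruct (Rdichotomy _ _ Hx) as [Hxn|Hxp]; destruct (Rdichotomy _ _ Hy) as [Hyn|Hyp].
    + rewrite (Rabs_left x), (Rabs_left y) in Habs by lra. lra.
    + exfalso. rewrite (Rabs_left x), (Rabs_pos_eq y) in Habs by lra.
      apply (rpowC_opp_neq y a Ha Hyp). now replace (- y)%R with x by lra.
    + exfalso. rewrite (Rabs_pos_eq x), (Rabs_left y) in Habs by lra.
      apply (rpowC_opp_neq x a Ha Hxp). now replace (- x)%R with y by lra.
    + rewrite (Rabs_pos_eq x), (Rabs_pos_eq y) in Habs by lra. lra.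
Qed.

Lemma rpowC_sub_neq0 x y a : (0 < a <= 1)%R -> x <> y -> rpowC x a - rpowC y a <> 0.
Proof. intros Ha Hxy H. apply Hxy, (rpowC_inj x y a Ha), Cminus_eq0, H. Qed.

Lemma rpowC_continuous (x0 a : R) : (0 < a)%R ->
  filterlim (fun x => rpowC x a) (locally x0) (locally (rpowC x0 a)).
Proof.
  intros Ha. rewrite filterlim_locally_ball_norm. intros eps. apply locally_R.
  change (exists d, 0 < d /\ forall x, Rabs (x - x0) < d ->
    Cmod (rpowC x a - rpowC x0 a) < eps)%R.
  destruct (Req_dec x0 0) as [->|Hx0].
  - exists (Rpower eps (/ a)). split; [apply exp_pos|].
    intros x Hx. rewrite rpowC_0, Rminus_0_r in *.
    replace (rpowC x a - 0) with (rpowC x a) by ring.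
    destruct (Req_dec x 0) as [->|Hx0]; [rewrite rpowC_0, Cmod_0; apply cond_pos|].
    rewrite Cmod_rpowC by auto.
    replace (pos eps) with (Rpower (Rpower eps (/ a)) a)
      by (rewrite Rpower_mult, Rinv_l, Rpower_1; auto; [apply cond_pos|lra]).
    apply Rlt_Rpower_l; [lra|]. split; [apply Rabs_pos_lt|]; auto.
  - destruct (Rpower_continuous_pos (Rabs x0) a (Rabs_pos_lt _ Hx0) eps (cond_pos eps))
      as [d [Hd Hc]].
    exists (Rmin d (Rabs x0)). split; [apply Rmin_pos; auto; apply Rabs_pos_lt; auto|].
    intros x Hx. pose proof (Rmin_l d (Rabs x0)). pose proof (Rmin_r d (Rabs x0)).
    assert (Hsame : (0 < x * x0)%R).
    { assert (Hclose : (Rabs (x - x0) < Rabs x0)%R) by lra.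
      apply Rabs_def2 in Hclose. destruct (Rdichotomy _ _ Hx0).
      - rewrite (Rabs_left x0) in Hclose by lra. nra.
      - rewrite (Rabs_pos_eq x0) in Hclose by lra. nra. }
    rewrite Cmod_rpowC_sub by exact Hsame. apply Hc.
    eapply Rle_lt_trans; [apply Rabs_triang_inv2|lra].
Qed.

End ComplexPower.

Section DeltaDerivative.
Local Open Scope C_scope.
Variables (T : R -> Prop) (f : R -> R) (t a : R).

Lemma delta_diff_iff_lim (D : C) : fwd_jump T t = t -> (0 < a <= 1)%R ->
  delta_diff_alpha T a f t D <->
  filterlim (fun s => (rpowC (f t) a - rpowC (f s) a) / (rpowC t a - rpowC s a))
            (within (fun s => T s /\ s <> t) (locally t)) (locally D).
Proof.
  intros Hfj Ha. rewrite filterlim_within_Cmod. unfold delta_diff_alpha. rewrite Hfj.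
  split; intros H eps He.
  - destruct (H (eps / 2)%R) as [d [Hd Hs]]; [lra|]. exists d. split; auto.
    intros s [Ts Hst] Hsd. specialize (Hs s Ts Hsd).
    assert (Hz := rpowC_sub_neq0 t s a Ha (not_eq_sym Hst)).
    rewrite Cmod_sub_mul_div in Hs by exact Hz.
    apply Rmult_le_reg_r in Hs; [lra|]. apply Cmod_gt_0, Hz.
  - destruct (H eps He) as [d [Hd Hs]]. exists d. split; auto.
    intros s Ts Hsd. destruct (Req_dec s t) as [->|Hst].
    + replace (rpowC (f t) a - rpowC (f t) a - D * (rpowC t a - rpowC t a)) with (RtoC 0)
        by ring.
      replace (rpowC t a - rpowC t a) with (RtoC 0) by ring.
      rewrite Cmod_0. lra.
    + assert (Hz := rpowC_sub_neq0 t s a Ha (not_eq_sym Hst)).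
      rewrite Cmod_sub_mul_div by exact Hz.
      apply Rmult_le_compat_r; [apply Cmod_ge_0|]. left. exact (Hs s (conj Ts Hst) Hsd).
Qed.

Lemma delta_diff_right_scattered : (0 < a <= 1)%R ->
  filterlim f (within T (locally t)) (locally (f t)) -> fwd_jump T t <> t ->
  delta_diff_alpha T a f t
    ((rpowC (f (fwd_jump T t)) a - rpowC (f t) a) / (rpowC (fwd_jump T t) a - rpowC t a)).
Proof.
  intros Ha Hf Hrs eps He.
  assert (HPQ := rpowC_sub_neq0 _ _ a Ha Hrs).
  set (K := Cmod (rpowC (fwd_jump T t) a - rpowC t a)).
  set (M := Cmod ((rpowC (f (fwd_jump T t)) a - rpowC (f t) a)
                  / (rpowC (fwd_jump T t) a - rpowC t a))).
  assert (HK : (0 < K)%R) by apply Cmod_gt_0, HPQ.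
  assert (HM : (0 <= M)%R) by apply Cmod_ge_0.
  set (eta := (eps * K / (1 + M + eps))%R).
  assert (Heta : (0 < eta)%R) by (apply Rdiv_lt_0_compat; nra).
  assert (HS : filterlim (fun s => rpowC s a) (within T (locally t))
                         (locally (rpowC t a))).
  { apply (filterlim_filter_le_1 _ (filter_le_within (F := locally t) T)).
    apply rpowC_continuous. lra. }
  assert (HF : filterlim (fun s => rpowC (f s) a) (within T (locally t))
                         (locally (rpowC (f t) a))).
  { apply (filterlim_comp _ _ _ f (fun y => rpowC y a) _ (locally (f t))); [exact Hf|].
    apply rpowC_continuous. lra. }
  rewrite filterlim_within_Cmod in HS, HF.
  destruct (HS eta Heta) as [d1 [Hd1 H1]]. destruct (HF eta Heta) as [d2 [Hd2 H2]].
  exists (Rmin d1 d2). split; [apply Rmin_pos; auto|]. intros s Ts Hs.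
  pose proof (Rmin_l d1 d2). pose proof (Rmin_r d1 d2).
  apply secant_estimate with (eta := eta).
  - exact HPQ.
  - lra.
  - apply Req_le. fold M K. unfold eta. field. lra.
  - apply H2; [exact Ts | lra].
  - apply H1; [exact Ts | lra].
Qed.

Lemma delta_diff_fwd_jump (D : C) : T t -> delta_diff_alpha T a f t D ->
  rpowC (f (fwd_jump T t)) a =
  rpowC (f t) a + (rpowC (fwd_jump T t) a - rpowC t a) * D.
Proof.
  intros Tt HD. apply Cminus_eq0.
  apply (Cmod_eq0_of_le_mul _ (Cmod (rpowC (fwd_jump T t) a - rpowC t a)));
    [apply Cmod_ge_0|].
  intros eps He. destruct (HD eps He) as [d [Hd Hs]].
  specialize (Hs t Tt ltac:(rewrite Rminus_eq_0, Rabs_R0; exact Hd)).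
  replace (rpowC (f (fwd_jump T t)) a -
           (rpowC (f t) a + (rpowC (fwd_jump T t) a - rpowC t a) * D))
    with (rpowC (f (fwd_jump T t)) a - rpowC (f t) a
          - D * (rpowC (fwd_jump T t) a - rpowC t a)) by ring.
  exact Hs.
Qed.

End DeltaDerivative.

Theorem theorem1 (T : R -> Prop) (f : R -> R) (t alpha : R) :
  time_scale T -> in_Tkappa T t -> 0 < alpha <= 1 ->
  (* (i) *)
  ((filterlim f (within T (locally t)) (locally (f t)) -> right_scattered T t ->
    delta_diff_alpha T alpha f t
      (Cdiv (Cminus (rpowC (f (fwd_jump T t)) alpha) (rpowC (f t) alpha))
            (Cminus (rpowC (fwd_jump T t) alpha) (rpowC t alpha))))
  /\
  (* (ii) *)
  (right_dense T t ->
    ((exists D : C, delta_diff_alpha T alpha f t D) <->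
     (exists L : C,
        filterlim (fun s => Cdiv (Cminus (rpowC (f t) alpha) (rpowC (f s) alpha))
                                 (Cminus (rpowC t alpha) (rpowC s alpha)))
                  (within (fun s => T s /\ s <> t) (locally t)) (locally L)))
    /\
    (forall D L : C, delta_diff_alpha T alpha f t D ->
        filterlim (fun s => Cdiv (Cminus (rpowC (f t) alpha) (rpowC (f s) alpha))
                                 (Cminus (rpowC t alpha) (rpowC s alpha)))
                  (within (fun s => T s /\ s <> t) (locally t)) (locally L) ->
        D = L))
  /\
  (* (iii) *)
  (forall D : C, delta_diff_alpha T alpha f t D ->
     rpowC (f (fwd_jump T t)) alpha =
     Cplus (rpowC (f t) alpha)
           (Cmult (Cminus (rpowC (fwd_jump T t) alpha) (rpowC t alpha)) D))).
Proof.
  intros _ [Tt _] Ha. split; [|split].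
  - intros Hf Hrs. apply delta_diff_right_scattered; [exact Ha | exact Hf | apply Rgt_not_eq, Hrs].
  - intros Hrd. assert (Hfj : fwd_jump T t = t) by apply Hrd.
    split; [split|].
    + intros [D HD]. exists D. apply delta_diff_iff_lim; auto.
    + intros [L HL]. exists L. apply (delta_diff_iff_lim T f t alpha L Hfj Ha), HL.
    + intros D L HD HL.
      eapply (filterlim_locally_unique (FF := within_punctured_proper T t Hrd));
        [apply delta_diff_iff_lim; eauto | exact HL].
  - intros D HD. apply delta_diff_fwd_jump; auto.
Qed.
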